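(* For $\lambda\in\mathbb R$ let $q_\lambda(x,y)=6x^5y+20\lambda x^3y^3+6xy^5$. Then: (1) if $\lambda=1$, $\mathcal S(q_\lambda)=\{(1,1)\}$; (2) if $\lambda>0$ and $\lambda\ne1$, $\mathcal S(q_\lambda)=\{(2,2)\}$; (3) if $-\tfrac35<\lambda\le0$, $\mathcal S(q_\lambda)=\{(2,3),(3,2)\}$; (4) if $\lambda\le-\tfrac35$, $\mathcal S(q_\lambda)=\{(3,3)\}$.
   Context: A representation of a real binary sextic $p$ is an expression $p=\sum_{j=1}^r\lambda_j(\alpha_jx+\beta_jy)^{6}$ with $r\ge0$, $\alpha_j,\beta_j\in\mathbb R$, $0\ne\lambda_j\in\mathbb R$; it is honest if the linear forms $\alpha_jx+\beta_jy$ are pairwise non-proportional. Its badge is $(a,b)$ where $a=\#\{j:\lambda_j>0\}$, $b=\#\{j:\lambda_j<0\}$; $\mathcal B(p)$ is the set of badges of honest representations. With $(a,b)\preceq(c,d)$ iff $a\le c,b\le d$, a signature is a minimal element of $\mathcal B(p)$, and $\mathcal S(p)$ is the set of signatures. *)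

From Stdlib Require Import Reals Lra Lia List.
Import ListNotations.
Open Scope R_scope.

(* A term lambda * (alpha x + beta y)^6 is encoded as the triple (lambda, alpha, beta). *)
Definition term : Type := (R * R * R)%type.
Definition tlam (t : term) : R := fst (fst t).
Definition talpha (t : term) : R := snd (fst t).
Definition tbeta (t : term) : R := snd t.

(* A real binary form of degree 6, seen as its polynomial function R^2 -> R. *)
Definition binform : Type := R -> R -> R.

Definition rep_eval (l : list term) (x y : R) : R :=
  fold_right (fun t acc => tlam t * (talpha t * x + tbeta t * y) ^ 6 + acc) 0 l.

Definition is_representation (p : binform) (l : list term) : Prop :=
  Forall (fun t => tlam t <> 0) l /\ forall x y : R, p x y = rep_eval l x y.

Definition nonproportional (s t : term) : Prop :=
  talpha s * tbeta t - talpha t * tbeta s <> 0.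

Definition honest (l : list term) : Prop := ForallOrdPairs nonproportional l.

Definition badge (l : list term) : nat * nat :=
  (length (filter (fun t => if Rlt_dec 0 (tlam t) then true else false) l),
   length (filter (fun t => if Rlt_dec (tlam t) 0 then true else false) l)).

Definition in_badges (p : binform) (ab : nat * nat) : Prop :=
  exists l : list term, is_representation p l /\ honest l /\ badge l = ab.

Definition badge_le (ab cd : nat * nat) : Prop :=
  (fst ab <= fst cd)%nat /\ (snd ab <= snd cd)%nat.

Definition is_signature (p : binform) (ab : nat * nat) : Prop :=
  in_badges p ab /\ forall cd, in_badges p cd -> badge_le cd ab -> cd = ab.

Definition q (lam : R) : binform :=
  fun x y => 6 * x ^ 5 * y + 20 * lam * x ^ 3 * y ^ 3 + 6 * x * y ^ 5.

From Stdlib Require Import Reals Lra Lia List Psatz.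
Import ListNotations.
Open Scope R_scope.

(* Lower bounds come from apolarity.  For a representation sum_j lambda_j l_j^6 of q_lam
   and any sextic c, sum_j lambda_j c(l_j) = c1 + lam c3 + c5 (moment identity); taking
   c = e^2 for a cubic e gives sum_j lambda_j e(l_j)^2 = hankel lam e.  So a cubic with
   positive Hankel value cannot vanish on all positively weighted forms, and exhibiting such
   cubics through one point (lam in (-1,1) or lam > 1) or through two points (lam <= -3/5,
   via a discriminant inequality) bounds the number of positive terms.  The sign flip
   y |-> -y swaps the badge, bounding negative terms as well.  For -1 < lam <= 0 the
   moment identity applied to multiples of the quartic through four points rules out
   badge (2, 2).  Upper bounds are explicit honest representations: sums of
   "pairs" c ((u x + y)^6 - (u x - y)^6) for the diagonal badges, and a one-parameter
   five-term family (plus lam = 0) for badge (2, 3).  The theorem then follows from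
   elementary facts on minimal elements of the badge order. *)

Definition lsum (f : term -> R) (l : list term) : R :=
  fold_right (fun t acc => f t + acc) 0 l.

Lemma lsum_ext (f g : term -> R) (l : list term) :
  (forall t, In t l -> f t = g t) -> lsum f l = lsum g l.
Proof.
  induction l as [|a l IH]; intros Hfg; simpl; [reflexivity|].
  rewrite (Hfg a (or_introl eq_refl)), IH; [reflexivity|].
  intros t Ht; apply Hfg; right; exact Ht.
Qed.

Lemma lsum_cons (f : term -> R) t l : lsum f (t :: l) = f t + lsum f l.
Proof. reflexivity. Qed.

Definition sext (c0 c1 c2 c3 c4 c5 c6 a b : R) : R :=
  c0*a^6 + c1*a^5*b + c2*a^4*b^2 + c3*a^3*b^3 + c4*a^2*b^4 + c5*a*b^5 + c6*b^6.

(* [coef i f] recovers the normalised coefficient f_i of a sextic form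
   f = sum_i C(6,i) f_i x^(6-i) y^i from seven values f(1,t), t = -3..3
   (central finite-difference stencils); binary forms are only given as functions. *)
Definition coef (i : nat) (f : binform) : R :=
  match i with
  | 0 => f 1 0
  | 1 => (f 1 3 - 9 * f 1 2 + 45 * f 1 1 - 45 * f 1 (-1) + 9 * f 1 (-2) - f 1 (-3)) / 360
  | 2 => (2 * f 1 3 - 27 * f 1 2 + 270 * f 1 1 - 490 * f 1 0 + 270 * f 1 (-1)
          - 27 * f 1 (-2) + 2 * f 1 (-3)) / 5400
  | 3 => (- f 1 3 + 8 * f 1 2 - 13 * f 1 1 + 13 * f 1 (-1) - 8 * f 1 (-2) + f 1 (-3)) / 960
  | 4 => (- f 1 3 + 12 * f 1 2 - 39 * f 1 1 + 56 * f 1 0 - 39 * f 1 (-1)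
          + 12 * f 1 (-2) - f 1 (-3)) / 2160
  | 5 => (f 1 3 - 4 * f 1 2 + 5 * f 1 1 - 5 * f 1 (-1) + 4 * f 1 (-2) - f 1 (-3)) / 1440
  | _ => (f 1 3 - 6 * f 1 2 + 15 * f 1 1 - 20 * f 1 0 + 15 * f 1 (-1)
          - 6 * f 1 (-2) + f 1 (-3)) / 720
  end.

Definition pairing (c0 c1 c2 c3 c4 c5 c6 : R) (f : binform) : R :=
  c0 * coef 0 f + c1 * coef 1 f + c2 * coef 2 f + c3 * coef 3 f
  + c4 * coef 4 f + c5 * coef 5 f + c6 * coef 6 f.

Lemma pairing_pow6 c0 c1 c2 c3 c4 c5 c6 a b :
  pairing c0 c1 c2 c3 c4 c5 c6 (fun x y => (a * x + b * y) ^ 6) = sext c0 c1 c2 c3 c4 c5 c6 a b.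
Proof. unfold pairing, coef, sext; field. Qed.

(* The normalised coefficients of q_lam are (0, 1, 0, lam, 0, 1, 0). *)
Lemma pairing_q c0 c1 c2 c3 c4 c5 c6 lam :
  pairing c0 c1 c2 c3 c4 c5 c6 (q lam) = c1 + lam * c3 + c5.
Proof. unfold pairing, coef, q; field. Qed.

Lemma pairing_ext c0 c1 c2 c3 c4 c5 c6 (f g : binform) :
  (forall x y, f x y = g x y) -> pairing c0 c1 c2 c3 c4 c5 c6 f = pairing c0 c1 c2 c3 c4 c5 c6 g.
Proof. intros Hfg; unfold pairing, coef; rewrite !Hfg; reflexivity. Qed.

Lemma pairing_rep_eval c0 c1 c2 c3 c4 c5 c6 l :
  pairing c0 c1 c2 c3 c4 c5 c6 (rep_eval l)
  = lsum (fun t => tlam t * sext c0 c1 c2 c3 c4 c5 c6 (talpha t) (tbeta t)) l.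
Proof.
  induction l as [|t l IH]; [unfold pairing, coef; simpl; field|].
  simpl lsum; rewrite <- IH, <- pairing_pow6.
  unfold pairing, coef; simpl rep_eval; field.
Qed.

Lemma moment_identity lam l c0 c1 c2 c3 c4 c5 c6 :
  is_representation (q lam) l ->
  lsum (fun t => tlam t * sext c0 c1 c2 c3 c4 c5 c6 (talpha t) (tbeta t)) l
  = c1 + lam * c3 + c5.
Proof.
  intros [_ Hrep].
  rewrite <- pairing_rep_eval, <- (pairing_ext _ _ _ _ _ _ _ _ _ Hrep).
  apply pairing_q.
Qed.

Lemma moment_vanishing lam l c0 c1 c2 c3 c4 c5 c6 :
  is_representation (q lam) l ->
  (forall t, In t l -> sext c0 c1 c2 c3 c4 c5 c6 (talpha t) (tbeta t) = 0) ->
  c1 + lam * c3 + c5 = 0.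
Proof.
  intros Hrep Hzero; rewrite <- (moment_identity lam l c0 c1 c2 c3 c4 c5 c6 Hrep).
  clear Hrep; induction l as [|t l IH]; [reflexivity|].
  rewrite lsum_cons, Hzero, IH; [ring| |left; reflexivity].
  intros s Hs; apply Hzero; right; exact Hs.
Qed.

Definition cubic (e0 e1 e2 e3 a b : R) : R := e0*a^3 + e1*a^2*b + e2*a*b^2 + e3*b^3.

(* The Hankel (catalecticant) quadratic form of q_lam on cubics: the moment of e^2. *)
Definition hankel (lam e0 e1 e2 e3 : R) : R := 2 * (e0*e1 + e2*e3 + lam * (e0*e3 + e1*e2)).

Lemma hankel_moment lam l e0 e1 e2 e3 :
  is_representation (q lam) l ->
  lsum (fun t => tlam t * (cubic e0 e1 e2 e3 (talpha t) (tbeta t)) ^ 2) l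
  = hankel lam e0 e1 e2 e3.
Proof.
  intros Hrep.
  rewrite (lsum_ext _ (fun t => tlam t * sext (e0*e0) (2*e0*e1) (e1*e1 + 2*e0*e2)
      (2*e0*e3 + 2*e1*e2) (e2*e2 + 2*e1*e3) (2*e2*e3) (e3*e3) (talpha t) (tbeta t))).
  - rewrite (moment_identity lam l _ _ _ _ _ _ _ Hrep); unfold hankel; ring.
  - intros t _; unfold cubic, sext; ring.
Qed.

Definition is_pos (t : term) : bool := if Rlt_dec 0 (tlam t) then true else false.
Definition is_neg (t : term) : bool := if Rlt_dec (tlam t) 0 then true else false.
Definition npos (l : list term) : nat := length (filter is_pos l).
Definition nneg (l : list term) : nat := length (filter is_neg l).

Lemma badge_npos_nneg l : badge l = (npos l, nneg l).
Proof. reflexivity. Qed.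

Lemma lsum_weighted_squares_nonpos (h : term -> R) l :
  (forall t, In t (filter is_pos l) -> h t = 0) -> lsum (fun t => tlam t * h t ^ 2) l <= 0.
Proof.
  induction l as [|t l IH]; intros Hzero; [simpl; lra|].
  rewrite lsum_cons.
  assert (Hrest : lsum (fun t => tlam t * h t ^ 2) l <= 0).
  { apply IH; intros s Hs; apply Hzero; simpl; destruct (is_pos t); [right|]; exact Hs. }
  destruct (Rlt_dec 0 (tlam t)) as [Hpos|Hnpos].
  - assert (Ht : h t = 0).
    { apply Hzero; simpl; unfold is_pos at 1.
      destruct (Rlt_dec 0 (tlam t)); [left; reflexivity|contradiction]. }
    rewrite Ht; nra.
  - pose proof (pow2_ge_0 (h t)); nra.
Qed.

Lemma positive_terms_not_annihilated lam l e0 e1 e2 e3 :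
  is_representation (q lam) l -> 0 < hankel lam e0 e1 e2 e3 ->
  ~ (forall t, In t (filter is_pos l) -> cubic e0 e1 e2 e3 (talpha t) (tbeta t) = 0).
Proof.
  intros Hrep Hpos Hzero.
  pose proof (hankel_moment lam l e0 e1 e2 e3 Hrep).
  pose proof (lsum_weighted_squares_nonpos _ l Hzero).
  lra.
Qed.

Lemma sq_pos x : x <> 0 -> 0 < x ^ 2.
Proof. intros Hx; pose proof (Rsqr_pos_lt x Hx); unfold Rsqr in *; lra. Qed.

Definition bqf (A B C u v : R) : R := A*u^2 + 2*B*u*v + C*v^2.

Lemma definite_bqf_pos A B C u v :
  0 < A -> B^2 < A*C -> u <> 0 \/ v <> 0 -> 0 < bqf A B C u v.
Proof.
  intros HA Hdisc Huv.
  assert (E : A * bqf A B C u v = (A*u + B*v)^2 + (A*C - B^2) * v^2) by (unfold bqf; ring).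
  destruct (Req_dec v 0) as [Hv|Hv].
  - replace (bqf A B C u v) with (A * u^2) by (unfold bqf; rewrite Hv; ring).
    destruct Huv as [Hu|]; [|contradiction].
    pose proof (sq_pos u Hu); nra.
  - pose proof (sq_pos v Hv); pose proof (pow2_ge_0 (A*u + B*v)).
    assert (0 < A * bqf A B C u v) by nra.
    nra.
Qed.

Lemma definite_bqf_kernel A B C c1 c2 :
  0 < A -> B^2 < A*C -> exists u v, c1*u + c2*v = 0 /\ 0 < bqf A B C u v.
Proof.
  intros HA Hdisc.
  destruct (Req_dec c1 0) as [Hc1|Hc1].
  - exists 1, 0; split; [rewrite Hc1; ring|]. apply definite_bqf_pos; [lra|lra|left; lra].
  - exists c2, (- c1); split; [ring|]. apply definite_bqf_pos; [lra|lra|right; lra].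
Qed.

Lemma indefinite_bqf_positive A B C : A*C < B^2 -> exists u v, 0 < bqf A B C u v.
Proof.
  intros Hdisc.
  destruct (Rlt_dec 0 A) as [HA|HA]; [exists 1, 0; unfold bqf; lra|].
  destruct (Req_dec A 0) as [HA0|HA0].
  - exists (1 - C), (2*B); unfold bqf; rewrite HA0 in *; nra.
  - exists (- B), A.
    replace (bqf A B C (- B) A) with (A * (A*C - B^2)) by (unfold bqf; ring).
    nra.
Qed.

(* For lam in (-1, 1) or lam > 1, every point is a zero of some cubic e with
   hankel lam e > 0: the Hankel form is definite on the plane of cubics (u,u,v,v)
   (resp. (u,v,v,u)), and that plane meets the hyperplane of cubics vanishing there. *)
Lemma one_point_annihilator lam a b :
  -1 < lam < 1 \/ 1 < lam ->
  exists e0 e1 e2 e3, cubic e0 e1 e2 e3 a b = 0 /\ 0 < hankel lam e0 e1 e2 e3.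
Proof.
  intros [Hlam|Hlam].
  - destruct (definite_bqf_kernel 2 (2*lam) 2 (a^3 + a^2*b) (a*b^2 + b^3))
      as (u & v & Hker & Hpos); [lra|nra|].
    exists u, u, v, v; split.
    + unfold cubic; lra.
    + replace (hankel lam u u v v) with (bqf 2 (2*lam) 2 u v) by (unfold hankel, bqf; ring).
      exact Hpos.
  - destruct (definite_bqf_kernel (2*lam) 2 (2*lam) (a^3 + b^3) (a^2*b + a*b^2))
      as (u & v & Hker & Hpos); [lra|nra|].
    exists u, v, v, u; split.
    + unfold cubic; lra.
    + replace (hankel lam u v v u) with (bqf (2*lam) 2 (2*lam) u v) by (unfold hankel, bqf; ring).
      exact Hpos.
Qed.

(* The inequality behind the threshold -3/5: with B = 4p + d, d > 0, the slack is
   4(5mu-3)(mu+1)p^2 + 4(2mu-1)(mu+1)pd + mu^2 d^2 when p > 0, which needs mu >= 3/5. *)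
Lemma discriminant_bound s p B mu :
  3/5 <= mu -> 4*p < B -> 0 <= B -> 2*p <= s -> - (2*p) <= s ->
  4*B*p*(1 - mu^2) < (s - 2*mu*p + mu*B)^2.
Proof.
  intros Hmu HB HB0 Hs1 Hs2.
  destruct (Rle_dec p 0) as [Hp|Hp].
  - set (X0 := - (2*p*(1 + mu)) + mu*B).
    assert (HX0 : 0 <= X0 <= s - 2*mu*p + mu*B) by (unfold X0; nra).
    assert (Hsq : X0^2 <= (s - 2*mu*p + mu*B)^2) by (apply pow_incr; exact HX0).
    assert (E : X0^2 - 4*B*p*(1 - mu^2) = 4*p^2*(1 + mu)^2 - 4*p*B*(1 + mu) + mu^2*B^2)
      by (unfold X0; ring).
    destruct (Req_dec p 0) as [Hp0|Hp0].
    + rewrite Hp0 in E, HB. assert (0 < mu^2*B^2) by (apply Rmult_lt_0_compat; nra). nra.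
    + assert (0 < p^2*(1 + mu)^2) by (apply Rmult_lt_0_compat; apply sq_pos; lra).
      assert (0 <= - p*B*(1 + mu)) by (apply Rmult_le_pos; [apply Rmult_le_pos|]; lra).
      pose proof (pow2_ge_0 (mu*B)).
      replace (mu^2*B^2) with ((mu*B)^2) in E by ring.
      lra.
  - set (X0 := 2*p*(1 + mu) + mu*(B - 4*p)).
    assert (HX0 : 0 <= X0 <= s - 2*mu*p + mu*B) by (unfold X0; nra).
    assert (Hsq : X0^2 <= (s - 2*mu*p + mu*B)^2) by (apply pow_incr; exact HX0).
    assert (E : X0^2 - 4*B*p*(1 - mu^2) = 4*(5*mu - 3)*(mu + 1)*p^2
               + 4*(2*mu - 1)*(mu + 1)*p*(B - 4*p) + mu^2*(B - 4*p)^2) by (unfold X0; ring).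
    assert (0 <= 4*(5*mu - 3)*(mu + 1)*p^2) by (apply Rmult_le_pos; [nra|apply pow2_ge_0]).
    assert (0 <= 4*(2*mu - 1)*(mu + 1)*p*(B - 4*p)).
    { apply Rmult_le_pos; [|lra]. apply Rmult_le_pos; [nra|lra]. }
    assert (0 < mu^2*(B - 4*p)^2) by (apply Rmult_lt_0_compat; apply sq_pos; lra).
    lra.
Qed.

(* For lam <= -3/5, two non-proportional points are zeros of a cubic e with
   hankel lam e > 0: on the pencil of cubics through both points the Hankel form is
   indefinite by [discriminant_bound]. *)
Lemma two_point_annihilator lam a1 b1 a2 b2 :
  lam <= -(3/5) -> a1*b2 - a2*b1 <> 0 ->
  exists e0 e1 e2 e3, cubic e0 e1 e2 e3 a1 b1 = 0 /\ cubic e0 e1 e2 e3 a2 b2 = 0 /\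
                      0 < hankel lam e0 e1 e2 e3.
Proof.
  intros Hlam Hnp.
  set (A := b1*b2). set (Bq := -(b1*a2 + a1*b2)). set (C := a1*a2).
  set (M11 := 2*Bq*(A + lam*C)).
  set (M12 := A^2 + C^2 + lam*(Bq^2 + 2*A*C)).
  set (M22 := 2*Bq*(lam*A + C)).
  assert (Hdisc : M11*M22 < M12^2).
  { assert (E : M12^2 - M11*M22 = (A^2 + C^2 - 2*(-lam)*(A*C) + (-lam)*Bq^2)^2
                                  - 4*Bq^2*(A*C)*(1 - (-lam)^2))
      by (unfold M11, M12, M22; ring).
    assert (Hsep : 4*(A*C) < Bq^2).
    { replace (Bq^2) with (4*(A*C) + (a1*b2 - a2*b1)^2) by (unfold A, Bq, C; ring).
      pose proof (sq_pos _ Hnp); lra. }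
    pose proof (discriminant_bound (A^2 + C^2) (A*C) (Bq^2) (-lam)) as Hb.
    pose proof (pow2_ge_0 (A - C)); pose proof (pow2_ge_0 (A + C)); pose proof (pow2_ge_0 Bq).
    assert (4*Bq^2*(A*C)*(1 - (-lam)^2) < (A^2 + C^2 - 2*(-lam)*(A*C) + (-lam)*Bq^2)^2)
      by (apply Hb; nra).
    lra. }
  destruct (indefinite_bqf_positive M11 M12 M22 Hdisc) as (u & v & Huv).
  exists (u*A), (u*Bq + v*A), (u*C + v*Bq), (v*C); split; [|split].
  - unfold cubic, A, Bq, C; ring.
  - unfold cubic, A, Bq, C; ring.
  - replace (hankel lam (u*A) (u*Bq + v*A) (u*C + v*Bq) (v*C)) with (bqf M11 M12 M22 u v)
      by (unfold hankel, bqf, M11, M12, M22; ring).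
    exact Huv.
Qed.

(* The one-point version for lam <= -3/5, obtained by adding an auxiliary point. *)
Lemma one_point_annihilator_neg lam a b :
  lam <= -(3/5) ->
  exists e0 e1 e2 e3, cubic e0 e1 e2 e3 a b = 0 /\ 0 < hankel lam e0 e1 e2 e3.
Proof.
  intros Hlam.
  destruct (Req_dec (a^2 + b^2) 0) as [Hab|Hab].
  - assert (a = 0) by nra; assert (b = 0) by nra; subst a b.
    destruct (two_point_annihilator lam 1 0 0 1 Hlam) as (e0 & e1 & e2 & e3 & _ & _ & Hpos);
      [lra|].
    exists e0, e1, e2, e3; split; [unfold cubic; ring|exact Hpos].
  - destruct (two_point_annihilator lam a b (- b) a Hlam) as (e0 & e1 & e2 & e3 & Hz & _ & Hpos);
      [intros H; apply Hab; lra|].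
    exists e0, e1, e2, e3; split; [exact Hz|exact Hpos].
Qed.

(* Every representation of q_lam has a positive term (use the cubic x^3 + x^2 y). *)
Lemma positive_count_ge1 lam l : is_representation (q lam) l -> (1 <= npos l)%nat.
Proof.
  intros Hrep; unfold npos.
  destruct (filter is_pos l) as [|t r] eqn:E; simpl; [exfalso|lia].
  apply (positive_terms_not_annihilated lam l 1 1 0 0 Hrep); [unfold hankel; lra|].
  rewrite E; intros t [].
Qed.

Lemma positive_count_ge2 lam l :
  -1 < lam < 1 \/ 1 < lam -> is_representation (q lam) l -> (2 <= npos l)%nat.
Proof.
  intros Hlam Hrep; unfold npos.
  destruct (filter is_pos l) as [|t [|t' r]] eqn:E; simpl; [exfalso|exfalso|lia].
  - destruct (one_point_annihilator lam 0 0 Hlam) as (e0 & e1 & e2 & e3 & _ & Hpos).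
    apply (positive_terms_not_annihilated lam l e0 e1 e2 e3 Hrep Hpos).
    rewrite E; intros s [].
  - destruct (one_point_annihilator lam (talpha t) (tbeta t) Hlam)
      as (e0 & e1 & e2 & e3 & Hzero & Hpos).
    apply (positive_terms_not_annihilated lam l e0 e1 e2 e3 Hrep Hpos).
    rewrite E; intros s [<-|[]]; exact Hzero.
Qed.

Lemma ForallOrdPairs_filter {A : Type} (rel : A -> A -> Prop) (f : A -> bool) (l : list A) :
  ForallOrdPairs rel l -> ForallOrdPairs rel (filter f l).
Proof.
  induction l as [|a l IH]; intros Hl; simpl; [constructor|].
  inversion_clear Hl as [|? ? Ha Hrest].
  destruct (f a); [constructor|]; auto.
  apply Forall_forall; intros x Hx; apply filter_In in Hx as [Hx _].
  exact (proj1 (Forall_forall _ _) Ha x Hx).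
Qed.

Lemma positive_count_ge3 lam l :
  lam <= -(3/5) -> is_representation (q lam) l -> honest l -> (3 <= npos l)%nat.
Proof.
  intros Hlam Hrep Hhon; unfold npos.
  pose proof (ForallOrdPairs_filter _ is_pos l Hhon) as Hhon_pos.
  destruct (filter is_pos l) as [|t [|t' [|t'' r]]] eqn:E; simpl; [exfalso|exfalso|exfalso|lia].
  - destruct (one_point_annihilator_neg lam 0 0 Hlam) as (e0 & e1 & e2 & e3 & _ & Hpos).
    apply (positive_terms_not_annihilated lam l e0 e1 e2 e3 Hrep Hpos).
    rewrite E; intros s [].
  - destruct (one_point_annihilator_neg lam (talpha t) (tbeta t) Hlam)
      as (e0 & e1 & e2 & e3 & Hzero & Hpos).
    apply (positive_terms_not_annihilated lam l e0 e1 e2 e3 Hrep Hpos).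
    rewrite E; intros s [<-|[]]; exact Hzero.
  - inversion_clear Hhon_pos as [|? ? Ht _]; inversion_clear Ht as [|? ? Hnp _].
    destruct (two_point_annihilator lam _ _ _ _ Hlam Hnp)
      as (e0 & e1 & e2 & e3 & Hzero & Hzero' & Hpos).
    apply (positive_terms_not_annihilated lam l e0 e1 e2 e3 Hrep Hpos).
    rewrite E; intros s [<-|[<-|[]]]; assumption.
Qed.

(* Sign flip: lambda (alpha x + beta y)^6 |-> -lambda (alpha x - beta y)^6.  For a form
   odd in y it maps representations to representations and swaps the badge. *)
Definition flip_term (t : term) : term := ((- tlam t, talpha t), - tbeta t).

Definition odd_in_y (p : binform) : Prop := forall x y, p x (- y) = - p x y.

Lemma q_odd_in_y lam : odd_in_y (q lam).
Proof. intros x y; unfold q; ring. Qed.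

Lemma rep_eval_flip l x y : rep_eval (map flip_term l) x y = - rep_eval l x (- y).
Proof.
  induction l as [|t l IH]; simpl; [ring|].
  rewrite IH; unfold flip_term, tlam, talpha, tbeta; simpl; ring.
Qed.

Lemma flip_representation p l :
  odd_in_y p -> is_representation p l -> is_representation p (map flip_term l).
Proof.
  intros Hodd [Hnz Hrep]; split.
  - apply Forall_map; eapply Forall_impl; [|exact Hnz].
    intros t Ht; unfold flip_term, tlam in *; simpl; lra.
  - intros x y; rewrite rep_eval_flip, <- Hrep, <- Hodd, Ropp_involutive; reflexivity.
Qed.

Lemma flip_honest l : honest l -> honest (map flip_term l).
Proof.
  induction 1 as [|t l Ht Hl IH]; simpl; constructor; [|exact IH].
  apply Forall_map; eapply Forall_impl; [|exact Ht].
  intros s Hs; unfold nonproportional, flip_term, talpha, tbeta in *; simpl; lra.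
Qed.

Lemma is_pos_flip t : is_pos (flip_term t) = is_neg t.
Proof.
  unfold is_pos, is_neg, flip_term, tlam; simpl.
  destruct (Rlt_dec 0 (- fst (fst t))), (Rlt_dec (fst (fst t)) 0); reflexivity || lra.
Qed.

Lemma is_neg_flip t : is_neg (flip_term t) = is_pos t.
Proof.
  unfold is_pos, is_neg, flip_term, tlam; simpl.
  destruct (Rlt_dec (- fst (fst t)) 0), (Rlt_dec 0 (fst (fst t))); reflexivity || lra.
Qed.

Lemma flip_npos l : npos (map flip_term l) = nneg l.
Proof.
  unfold npos, nneg; induction l as [|t l IH]; [reflexivity|].
  simpl; rewrite is_pos_flip; destruct (is_neg t); simpl; rewrite IH; reflexivity.
Qed.

Lemma flip_nneg l : nneg (map flip_term l) = npos l.
Proof.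
  unfold npos, nneg; induction l as [|t l IH]; [reflexivity|].
  simpl; rewrite is_neg_flip; destruct (is_pos t); simpl; rewrite IH; reflexivity.
Qed.

Lemma in_badges_swap p a b : odd_in_y p -> in_badges p (a, b) -> in_badges p (b, a).
Proof.
  intros Hodd (l & Hrep & Hhon & Hbadge).
  exists (map flip_term l); split; [apply flip_representation; assumption|].
  split; [apply flip_honest; assumption|].
  rewrite badge_npos_nneg in *; rewrite flip_npos, flip_nneg.
  injection Hbadge as <- <-; reflexivity.
Qed.

Lemma even_quartic_roots_equal_squares e2 e4 x y :
  e4 < 0 -> x^4 + e2*x^2 + e4 = 0 -> y^4 + e2*y^2 + e4 = 0 -> x^2 = y^2.
Proof.
  intros He4 Hx Hy.
  assert (E : (x^2 - y^2) * (x^2 + y^2 + e2) = 0).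
  { replace ((x^2 - y^2) * (x^2 + y^2 + e2))
      with ((x^4 + e2*x^2 + e4) - (y^4 + e2*y^2 + e4)) by ring.
    rewrite Hx, Hy; ring. }
  apply Rmult_integral in E as [E|E]; [lra|].
  assert (e4 = x^2 * y^2) by (replace e2 with (- (x^2 + y^2)) in Hx by lra; nra).
  pose proof (pow2_ge_0 x); pose proof (pow2_ge_0 y); nra.
Qed.

Lemma equal_squares_opposite x y : x^2 = y^2 -> x <> y -> y = - x.
Proof.
  intros Hsq Hxy.
  assert (E : (x - y) * (x + y) = 0) by (replace ((x - y) * (x + y)) with (x^2 - y^2) by ring; lra).
  apply Rmult_integral in E as [E|E]; lra.
Qed.

Lemma even_quartic_no_three_roots e2 e4 z1 z2 z3 :
  e4 < 0 ->
  z1^4 + e2*z1^2 + e4 = 0 -> z2^4 + e2*z2^2 + e4 = 0 -> z3^4 + e2*z3^2 + e4 = 0 ->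
  z1 <> z2 -> z1 <> z3 -> z2 <> z3 -> False.
Proof.
  intros He4 H1 H2 H3 D12 D13 D23.
  pose proof (even_quartic_roots_equal_squares e2 e4 z1 z2 He4 H1 H2) as S12.
  pose proof (even_quartic_roots_equal_squares e2 e4 z1 z3 He4 H1 H3) as S13.
  pose proof (equal_squares_opposite z1 z2 S12 D12).
  pose proof (equal_squares_opposite z1 z3 S13 D13).
  lra.
Qed.

(* Four reals with e1 = e3 = 0 and 1 + lam e2 + e4 = 0, lam <= 0, cannot have three
   distinct values: e2 <= 0 forces e4 < 0, and they are roots of z^4 + e2 z^2 + e4. *)
Lemma symmetric_functions_obstruction lam t1 t2 t3 t4 :
  lam <= 0 -> t1 <> t2 -> t1 <> t3 -> t2 <> t3 ->
  t1 + t2 + t3 + t4 = 0 ->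
  t1*t2*t3 + t1*t2*t4 + t1*t3*t4 + t2*t3*t4 = 0 ->
  1 + lam*(t1*t2 + t1*t3 + t1*t4 + t2*t3 + t2*t4 + t3*t4) + t1*t2*t3*t4 = 0 -> False.
Proof.
  intros Hlam D12 D13 D23 He1 He3 Hrel.
  set (e2 := t1*t2 + t1*t3 + t1*t4 + t2*t3 + t2*t4 + t3*t4) in *.
  set (e4 := t1*t2*t3*t4) in *.
  assert (He2 : e2 <= 0).
  { assert (E : (t1 + t2 + t3 + t4)^2 = t1^2 + t2^2 + t3^2 + t4^2 + 2*e2) by (unfold e2; ring).
    rewrite He1 in E.
    pose proof (pow2_ge_0 t1); pose proof (pow2_ge_0 t2);
    pose proof (pow2_ge_0 t3); pose proof (pow2_ge_0 t4); lra. }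
  assert (He4 : e4 < 0) by nra.
  assert (Hroot : forall z, z = t1 \/ z = t2 \/ z = t3 -> z^4 + e2*z^2 + e4 = 0).
  { intros z Hz.
    replace (z^4 + e2*z^2 + e4) with ((z - t1)*(z - t2)*(z - t3)*(z - t4)
      + (t1 + t2 + t3 + t4)*z^3 + (t1*t2*t3 + t1*t2*t4 + t1*t3*t4 + t2*t3*t4)*z)
      by (unfold e2, e4; ring).
    rewrite He1, He3; destruct Hz as [-> | [-> | ->]]; ring. }
  apply (even_quartic_no_three_roots e2 e4 t1 t2 t3); auto.
Qed.

Lemma axis_point_product a b c1 d1 c2 d2 c3 d3 :
  b = 0 -> a*d1 - c1*b <> 0 -> a*d2 - c2*b <> 0 -> a*d3 - c3*b <> 0 ->
  a*d1*d2*d3 <> 0.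
Proof.
  intros -> H1 H2 H3.
  rewrite Rmult_0_r, Rminus_0_r in H1, H2, H3.
  assert (a <> 0) by (intros ->; apply H1; ring).
  assert (d1 <> 0) by (intros ->; apply H1; ring).
  assert (d2 <> 0) by (intros ->; apply H2; ring).
  assert (d3 <> 0) by (intros ->; apply H3; ring).
  repeat apply Rmult_integral_contrapositive_currified; assumption.
Qed.

Section FourPoints.

Variables a1 b1 a2 b2 a3 b3 a4 b4 : R.

Hypothesis np12 : a1*b2 - a2*b1 <> 0.
Hypothesis np13 : a1*b3 - a3*b1 <> 0.
Hypothesis np14 : a1*b4 - a4*b1 <> 0.
Hypothesis np23 : a2*b3 - a3*b2 <> 0.
Hypothesis np24 : a2*b4 - a4*b2 <> 0.
Hypothesis np34 : a3*b4 - a4*b3 <> 0.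

Definition g0 : R := b1*b2*b3*b4.
Definition g1 : R := -(a1*b2*b3*b4 + b1*a2*b3*b4 + b1*b2*a3*b4 + b1*b2*b3*a4).
Definition g2 : R :=
  a1*a2*b3*b4 + a1*b2*a3*b4 + a1*b2*b3*a4 + b1*a2*a3*b4 + b1*a2*b3*a4 + b1*b2*a3*a4.
Definition g3 : R := -(a1*a2*a3*b4 + a1*a2*b3*a4 + a1*b2*a3*a4 + b1*a2*a3*a4).
Definition g4 : R := a1*a2*a3*a4.

Definition quartic (x y : R) : R :=
  (b1*x - a1*y) * (b2*x - a2*y) * (b3*x - a3*y) * (b4*x - a4*y).

Lemma quartic_coefficients x y :
  quartic x y = g0*x^4 + g1*x^3*y + g2*x^2*y^2 + g3*x*y^3 + g4*y^4.
Proof. unfold quartic, g0, g1, g2, g3, g4; ring. Qed.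

(* If every linear form of a representation of q_lam is a zero of g, then pairing
   q_lam with x^2 g, x y g, y^2 g yields three linear relations among the g_i. *)
Lemma quartic_coefficient_relations lam l :
  is_representation (q lam) l -> (forall t, In t l -> quartic (talpha t) (tbeta t) = 0) ->
  g1 + lam*g3 = 0 /\ lam*g1 + g3 = 0 /\ g0 + lam*g2 + g4 = 0.
Proof.
  intros Hrep Hzero.
  assert (Hmult : forall a b c0 c1 c2, quartic a b = 0 ->
            sext (c0*g0) (c0*g1 + c1*g0) (c0*g2 + c1*g1 + c2*g0) (c0*g3 + c1*g2 + c2*g1)
                 (c0*g4 + c1*g3 + c2*g2) (c1*g4 + c2*g3) (c2*g4) a b = 0).
  { intros a b c0 c1 c2 Hab.
    replace (sext _ _ _ _ _ _ _ a b) with ((c0*a^2 + c1*a*b + c2*b^2) * quartic a b)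
      by (rewrite quartic_coefficients; unfold sext; ring).
    rewrite Hab; ring. }
  pose proof (moment_vanishing lam l _ _ _ _ _ _ _ Hrep
    (fun t Ht => Hmult _ _ 1 0 0 (Hzero t Ht))).
  pose proof (moment_vanishing lam l _ _ _ _ _ _ _ Hrep
    (fun t Ht => Hmult _ _ 0 1 0 (Hzero t Ht))).
  pose proof (moment_vanishing lam l _ _ _ _ _ _ _ Hrep
    (fun t Ht => Hmult _ _ 0 0 1 (Hzero t Ht))).
  repeat split; nra.
Qed.

Lemma g1_nonzero_on_axis : g1 = 0 -> b1 <> 0 /\ b2 <> 0 /\ b3 <> 0 /\ b4 <> 0.
Proof.
  intros Hg1; unfold g1 in Hg1; repeat split; intros Hb.
  - apply (axis_point_product a1 b1 a2 b2 a3 b3 a4 b4 Hb np12 np13 np14).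
    rewrite Hb in Hg1; lra.
  - apply (axis_point_product a2 b2 a1 b1 a3 b3 a4 b4 Hb ltac:(lra) np23 np24).
    rewrite Hb in Hg1; lra.
  - apply (axis_point_product a3 b3 a1 b1 a2 b2 a4 b4 Hb ltac:(lra) ltac:(lra) np34).
    rewrite Hb in Hg1; lra.
  - apply (axis_point_product a4 b4 a1 b1 a2 b2 a3 b3 Hb ltac:(lra) ltac:(lra) ltac:(lra)).
    rewrite Hb in Hg1; lra.
Qed.

(* For -1 < lam <= 0 the three relations are contradictory: they give g1 = g3 = 0,
   and dehomogenising at t_i = a_i / b_i contradicts [symmetric_functions_obstruction]. *)
Lemma four_point_obstruction lam :
  -1 < lam <= 0 -> g1 + lam*g3 = 0 -> lam*g1 + g3 = 0 -> g0 + lam*g2 + g4 = 0 -> False.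
Proof.
  intros Hlam E13 E31 E024.
  assert (Hg1 : g1 = 0).
  { assert (E : g1 * ((1 + lam) * (1 - lam)) = 0)
      by (replace (g1 * ((1 + lam) * (1 - lam))) with ((g1 + lam*g3) - lam*(lam*g1 + g3)) by ring;
          rewrite E13, E31; ring).
    apply Rmult_integral in E as [E|E]; [exact E|].
    apply Rmult_integral in E as [E|E]; lra. }
  assert (Hg3 : g3 = 0) by (rewrite Hg1 in E31; lra).
  destruct (g1_nonzero_on_axis Hg1) as (Hb1 & Hb2 & Hb3 & Hb4).
  set (P := b1*b2*b3*b4).
  assert (HP : P <> 0) by (unfold P; repeat apply Rmult_integral_contrapositive_currified; auto).
  set (t1 := a1/b1); set (t2 := a2/b2); set (t3 := a3/b3); set (t4 := a4/b4).
  apply (symmetric_functions_obstruction lam t1 t2 t3 t4); [lra| | | | | |].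
  - intros E; apply np12.
    replace (a1*b2 - a2*b1) with ((t1 - t2) * (b1*b2)) by (unfold t1, t2; field; auto).
    rewrite E; ring.
  - intros E; apply np13.
    replace (a1*b3 - a3*b1) with ((t1 - t3) * (b1*b3)) by (unfold t1, t3; field; auto).
    rewrite E; ring.
  - intros E; apply np23.
    replace (a2*b3 - a3*b2) with ((t2 - t3) * (b2*b3)) by (unfold t2, t3; field; auto).
    rewrite E; ring.
  - apply (Rmult_eq_reg_l (- P)); [|lra].
    rewrite Rmult_0_r, <- Hg1; unfold g1, P, t1, t2, t3, t4; field; auto.
  - apply (Rmult_eq_reg_l (- P)); [|lra].
    rewrite Rmult_0_r, <- Hg3; unfold g3, P, t1, t2, t3, t4; field; auto.
  - apply (Rmult_eq_reg_l P); [|exact HP].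
    rewrite Rmult_0_r, <- E024; unfold g0, g2, g4, P, t1, t2, t3, t4; field; auto.
Qed.

End FourPoints.

Lemma honest_four t1 t2 t3 t4 :
  honest [t1; t2; t3; t4] ->
  nonproportional t1 t2 /\ nonproportional t1 t3 /\ nonproportional t1 t4 /\
  nonproportional t2 t3 /\ nonproportional t2 t4 /\ nonproportional t3 t4.
Proof.
  intros Hhon.
  repeat match goal with
         | H : honest _ |- _ => unfold honest in H
         | H : ForallOrdPairs _ (_ :: _) |- _ => inversion_clear H
         | H : Forall _ (_ :: _) |- _ => inversion_clear H
         end.
  tauto.
Qed.

Lemma no_four_term_representation lam l :
  -1 < lam <= 0 -> is_representation (q lam) l -> honest l -> length l = 4%nat -> False.
Proof.
  intros Hlam Hrep Hhon Hlen.
  destruct l as [|t1 [|t2 [|t3 [|t4 [|t5 l]]]]]; try discriminate.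
  destruct (honest_four _ _ _ _ Hhon) as (n12 & n13 & n14 & n23 & n24 & n34).
  destruct (quartic_coefficient_relations (talpha t1) (tbeta t1) (talpha t2) (tbeta t2)
              (talpha t3) (tbeta t3) (talpha t4) (tbeta t4) lam _ Hrep) as (E13 & E31 & E024).
  { intros t [<- | [<- | [<- | [<- | []]]]]; unfold quartic; ring. }
  exact (four_point_obstruction _ _ _ _ _ _ _ _ n12 n13 n14 n23 n24 n34 lam Hlam E13 E31 E024).
Qed.

Lemma length_npos_nneg l :
  Forall (fun t => tlam t <> 0) l -> length l = (npos l + nneg l)%nat.
Proof.
  unfold npos, nneg; induction 1 as [|t l Ht Hl IH]; [reflexivity|].
  simpl; unfold is_pos at 1, is_neg at 1.
  destruct (Rlt_dec 0 (tlam t)), (Rlt_dec (tlam t) 0); simpl; lra || lia.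
Qed.

Lemma no_badge_22 lam : -1 < lam <= 0 -> ~ in_badges (q lam) (2%nat, 2%nat).
Proof.
  intros Hlam (l & Hrep & Hhon & Hbadge).
  rewrite badge_npos_nneg in Hbadge; injection Hbadge as Hpos Hneg.
  apply (no_four_term_representation lam l Hlam Hrep Hhon).
  rewrite (length_npos_nneg l (proj1 Hrep)), Hpos, Hneg; reflexivity.
Qed.

(* Constructions.  A pair (c, U), U > 0, gives the two terms
   c/(2 sqrt U) ((sqrt U x + y)^6 - (sqrt U x - y)^6) = c (6U^2 x^5y + 20U x^3y^3 + 6xy^5),
   one positive and one negative. *)
Definition pair_terms (c U : R) : list term :=
  [((c / (2 * sqrt U), sqrt U), 1); ((- (c / (2 * sqrt U)), sqrt U), -1)].

Lemma pair_terms_eval c U x y :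
  0 < U -> rep_eval (pair_terms c U) x y = c * (6*U^2*x^5*y + 20*U*x^3*y^3 + 6*x*y^5).
Proof.
  intros HU.
  assert (Hu : 0 < sqrt U) by (apply sqrt_lt_R0; exact HU).
  rewrite <- (pow2_sqrt U) at 2 3 by lra.
  unfold pair_terms, rep_eval, tlam, talpha, tbeta; simpl; field; lra.
Qed.

Definition pairs_terms (ps : list (R * R)) : list term :=
  flat_map (fun p => pair_terms (fst p) (snd p)) ps.

Definition pair_moment (k : nat) (ps : list (R * R)) : R :=
  fold_right (fun p s => fst p * snd p ^ k + s) 0 ps.

Definition valid_pair (p : R * R) : Prop := fst p <> 0 /\ 0 < snd p.

Lemma rep_eval_app l1 l2 x y : rep_eval (l1 ++ l2) x y = rep_eval l1 x y + rep_eval l2 x y.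
Proof. induction l1 as [|t l1 IH]; simpl; [ring|]; rewrite IH; ring. Qed.

Lemma pairs_terms_eval ps x y :
  Forall valid_pair ps ->
  rep_eval (pairs_terms ps) x y
  = 6 * pair_moment 2 ps * x^5*y + 20 * pair_moment 1 ps * x^3*y^3 + 6 * pair_moment 0 ps * x*y^5.
Proof.
  unfold pairs_terms; induction 1 as [|[c U] ps [_ HU] Hps IH]; [simpl; ring|].
  cbn [flat_map fst snd]; rewrite rep_eval_app, pair_terms_eval, IH by exact HU.
  unfold pair_moment; simpl; ring.
Qed.

Lemma pair_terms_signs c U :
  valid_pair (c, U) ->
  Forall (fun t => tlam t <> 0) (pair_terms c U) /\
  npos (pair_terms c U) = 1%nat /\ nneg (pair_terms c U) = 1%nat.
Proof.
  intros [Hc HU].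
  assert (Hw : c / (2 * sqrt U) <> 0).
  { assert (0 < sqrt U) by (apply sqrt_lt_R0; exact HU).
    unfold Rdiv; apply Rmult_integral_contrapositive_currified; [exact Hc|].
    apply Rinv_neq_0_compat; lra. }
  unfold pair_terms, npos, nneg, is_pos, is_neg, tlam; simpl.
  split; [repeat constructor; simpl; lra|].
  destruct (Rlt_dec 0 (c / (2 * sqrt U))), (Rlt_dec 0 (- (c / (2 * sqrt U)))),
    (Rlt_dec (c / (2 * sqrt U)) 0), (Rlt_dec (- (c / (2 * sqrt U))) 0);
    simpl; split; reflexivity || lra.
Qed.

Lemma pairs_terms_signs ps :
  Forall valid_pair ps ->
  Forall (fun t => tlam t <> 0) (pairs_terms ps) /\
  npos (pairs_terms ps) = length ps /\ nneg (pairs_terms ps) = length ps.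
Proof.
  unfold pairs_terms, npos, nneg; induction 1 as [|[c U] ps Hp Hps IH]; [repeat constructor|].
  destruct (pair_terms_signs c U Hp) as (Hnz & Hpos & Hneg).
  destruct IH as (IHnz & IHpos & IHneg).
  cbn [flat_map fst snd]; rewrite !filter_app, !length_app, IHpos, IHneg.
  unfold npos, nneg in Hpos, Hneg; rewrite Hpos, Hneg.
  split; [apply Forall_app; split; assumption|split; reflexivity].
Qed.

Lemma ForallOrdPairs_app {A : Type} (rel : A -> A -> Prop) (l1 l2 : list A) :
  ForallOrdPairs rel l1 -> ForallOrdPairs rel l2 ->
  (forall x y, In x l1 -> In y l2 -> rel x y) -> ForallOrdPairs rel (l1 ++ l2).
Proof.
  induction 1 as [|a l1 Ha Hl1 IH]; intros Hl2 Hcross; simpl; [exact Hl2|].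
  constructor.
  - apply Forall_app; split; [exact Ha|].
    apply Forall_forall; intros y Hy; apply Hcross; [left|]; auto.
  - apply IH; [exact Hl2|]. intros x y Hx Hy; apply Hcross; [right|]; auto.
Qed.

Lemma pair_terms_nonproportional c U c' U' t t' :
  0 < U -> 0 < U' -> U <> U' -> In t (pair_terms c U) -> In t' (pair_terms c' U') ->
  nonproportional t t'.
Proof.
  intros HU HU' HUU' Ht Ht'.
  assert (Hu : 0 < sqrt U) by (apply sqrt_lt_R0; exact HU).
  assert (Hu' : 0 < sqrt U') by (apply sqrt_lt_R0; exact HU').
  assert (Huu' : sqrt U <> sqrt U') by (intros E; apply HUU'; apply sqrt_inj; lra).
  unfold pair_terms in Ht, Ht'; unfold nonproportional.
  destruct Ht as [<- | [<- | []]], Ht' as [<- | [<- | []]];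
    unfold talpha, tbeta; simpl; intros E; apply Huu'; lra.
Qed.

Lemma pairs_terms_honest ps :
  Forall valid_pair ps -> ForallOrdPairs (fun p p' => snd p <> snd p') ps ->
  honest (pairs_terms ps).
Proof.
  unfold honest, pairs_terms; intros Hvalid Hdist.
  induction Hdist as [|[c U] ps Hhead Hdist IH]; [constructor|].
  cbn [flat_map fst snd] in *.
  inversion_clear Hvalid as [|? ? [_ HU] Hvalid'].
  apply ForallOrdPairs_app; [| apply IH; exact Hvalid' |].
  - assert (0 < sqrt U) by (apply sqrt_lt_R0; exact HU).
    repeat constructor; unfold nonproportional, talpha, tbeta; simpl; lra.
  - intros t t' Ht Ht'.
    apply in_flat_map in Ht' as ([c' U'] & Hp' & Ht').
    rewrite Forall_forall in Hhead, Hvalid'.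
    apply (pair_terms_nonproportional c U c' U'); auto.
    + exact (proj2 (Hvalid' _ Hp')).
    + exact (Hhead _ Hp').
Qed.

Lemma pairs_in_badges lam ps :
  Forall valid_pair ps -> ForallOrdPairs (fun p p' => snd p <> snd p') ps ->
  pair_moment 0 ps = 1 -> pair_moment 1 ps = lam -> pair_moment 2 ps = 1 ->
  in_badges (q lam) (length ps, length ps).
Proof.
  intros Hvalid Hdist M0 M1 M2.
  destruct (pairs_terms_signs ps Hvalid) as (Hnz & Hpos & Hneg).
  exists (pairs_terms ps); split; [split|split].
  - exact Hnz.
  - intros x y; rewrite pairs_terms_eval, M0, M1, M2 by exact Hvalid; unfold q; ring.
  - exact (pairs_terms_honest ps Hvalid Hdist).
  - rewrite badge_npos_nneg, Hpos, Hneg; reflexivity.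
Qed.

Lemma badge_11_at_1 : in_badges (q 1) (1%nat, 1%nat).
Proof.
  apply (pairs_in_badges 1 [(1, 1)]); unfold pair_moment, valid_pair; simpl;
    repeat constructor; simpl; lra.
Qed.

Lemma two_pairs_in_badges lam U V :
  0 < U -> 0 < V -> U <> V -> lam <> U -> lam <> V -> 1 - lam*(U + V) + U*V = 0 ->
  in_badges (q lam) (2%nat, 2%nat).
Proof.
  intros HU HV HUV HlamU HlamV Hrel.
  set (A := (lam - V) / (U - V)); set (B := (U - lam) / (U - V)).
  assert (HA : A <> 0).
  { unfold A, Rdiv; apply Rmult_integral_contrapositive_currified; [lra|].
    apply Rinv_neq_0_compat; lra. }
  assert (HB : B <> 0).
  { unfold B, Rdiv; apply Rmult_integral_contrapositive_currified; [lra|].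
    apply Rinv_neq_0_compat; lra. }
  apply (pairs_in_badges lam [(A, U); (B, V)]); unfold pair_moment, valid_pair; simpl.
  - repeat constructor; simpl; assumption.
  - repeat constructor; simpl; assumption.
  - unfold A, B; field; lra.
  - unfold A, B; field; lra.
  - transitivity (lam*(U + V) - U*V); [unfold A, B; field; lra|lra].
Qed.

Lemma badge_22 lam : 0 < lam -> lam <> 1 -> in_badges (q lam) (2%nat, 2%nat).
Proof.
  intros Hlam Hlam1.
  set (U := lam / (2 + 2*lam^2)).
  assert (EU : U * (2 + 2*lam^2) = lam) by (unfold U; field; nra).
  assert (HU : 0 < U) by (apply Rdiv_lt_0_compat; nra).
  assert (HUlam : U < lam) by nra.
  assert (HlamU : 2*lam*U < 1).
  { assert (E : (1 - 2*lam*U) * (1 + lam^2) = 1).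
    { transitivity (1 + lam^2 - lam * (U * (2 + 2*lam^2))); [ring|rewrite EU; ring]. }
    nra. }
  set (V := (1 - lam*U) / (lam - U)).
  assert (HV : V * (lam - U) = 1 - lam*U) by (unfold V; field; lra).
  assert (HVpos : 0 < V) by (apply Rdiv_lt_0_compat; nra).
  apply (two_pairs_in_badges lam U V); try lra.
  - intros E; rewrite <- E in HV; nra.
  - intros E; rewrite <- E in HV.
    assert (E2 : (lam - 1) * (lam + 1) = 0) by nra.
    apply Rmult_integral in E2 as [E2|E2]; lra.
Qed.

Lemma badge_33 lam : lam < 1 -> in_badges (q lam) (3%nat, 3%nat).
Proof.
  intros Hlam.
  apply (pairs_in_badges lam [((37 - 13*lam)/24, 1); (-(2/3)*(1 - lam), 4); ((1 - lam)/8, 9)]);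
    unfold pair_moment, valid_pair; simpl; try field.
  - repeat constructor; simpl; lra.
  - repeat constructor; simpl; lra.
Qed.

Lemma is_pos_true t : 0 < tlam t -> is_pos t = true.
Proof. intros H; unfold is_pos; destruct (Rlt_dec 0 (tlam t)); [reflexivity|contradiction]. Qed.

Lemma is_pos_false t : tlam t < 0 -> is_pos t = false.
Proof. intros H; unfold is_pos; destruct (Rlt_dec 0 (tlam t)); [lra|reflexivity]. Qed.

Lemma is_neg_true t : tlam t < 0 -> is_neg t = true.
Proof. intros H; unfold is_neg; destruct (Rlt_dec (tlam t) 0); [reflexivity|contradiction]. Qed.

Lemma is_neg_false t : 0 < tlam t -> is_neg t = false.
Proof. intros H; unfold is_neg; destruct (Rlt_dec (tlam t) 0); [lra|reflexivity]. Qed.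

Ltac count_signs :=
  rewrite badge_npos_nneg; unfold npos, nneg; cbn [filter];
  repeat first [ rewrite is_pos_true by (unfold tlam; cbn [fst snd]; lra)
               | rewrite is_pos_false by (unfold tlam; cbn [fst snd]; lra)
               | rewrite is_neg_true by (unfold tlam; cbn [fst snd]; lra)
               | rewrite is_neg_false by (unfold tlam; cbn [fst snd]; lra) ];
  reflexivity.

Lemma badge_23_at_0 : in_badges (q 0) (2%nat, 3%nat).
Proof.
  exists [((-(4/2223), -3), 1); ((-(85/12), 0), 1); ((-(243/364), 4/3), 1);
          ((4/9, 3/2), 1); ((972/133, 1/6), 1)].
  split; [split|split].
  - repeat constructor; unfold tlam; simpl; lra.
  - intros x y; unfold q, rep_eval, tlam, talpha, tbeta; simpl; field.
  - repeat constructor; unfold nonproportional, talpha, tbeta; simpl; lra.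
  - count_signs.
Qed.

(* For u > 1, a five-term honest representation of q_(lam_of u) with badge (2, 3), on the
   forms x + y, u x + y, x + u y, u^2 x + y, x + u^2 y.  lam_of maps (1, oo) onto (-3/5, 0). *)
Definition lam_of (u : R) : R := - (u * (1 + u + u^2)) / (1 + u + u^2 + u^3 + u^4).

Definition family_terms (u : R) : list term :=
  let d := (u - 1)^4 * u * (1 + u + u^2) * (1 + u + u^2 + u^3 + u^4) in
  [((u * (1 - u + u^2) * (1 + u^4) / ((u - 1)^3 * (1 - u^5)), 1), 1);
   (((1 + u^2) * (1 + u^4) / d, u), 1); (((1 + u^2) * (1 + u^4) / d, 1), u);
   ((-1 / d, u^2), 1); ((-1 / d, 1), u^2)].

Lemma family_in_badges u : 1 < u -> in_badges (q (lam_of u)) (2%nat, 3%nat).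
Proof.
  intros Hu.
  assert (H3 : 0 < 1 + u + u^2) by nra.
  assert (H5 : 0 < 1 + u + u^2 + u^3 + u^4) by nra.
  assert (Hu2 : 1 < u^2) by nra.
  assert (Hu4 : 1 < u^4) by (replace (u^4) with (u^2 * u^2) by ring; nra).
  assert (Hu5 : 1 < u^5) by (replace (u^5) with (u^4 * u) by ring; nra).
  exists (family_terms u); unfold family_terms; cbv zeta.
  set (d := (u - 1)^4 * u * (1 + u + u^2) * (1 + u + u^2 + u^3 + u^4)).
  assert (Hd : 0 < d) by (unfold d; repeat apply Rmult_lt_0_compat; try lra; apply pow_lt; lra).
  assert (Hw0 : u * (1 - u + u^2) * (1 + u^4) / ((u - 1)^3 * (1 - u^5)) < 0).
  { unfold Rdiv; apply Rmult_pos_neg.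
    - repeat apply Rmult_lt_0_compat; nra.
    - apply Rinv_lt_0_compat, Rmult_pos_neg; [apply pow_lt|]; lra. }
  assert (Hw1 : 0 < (1 + u^2) * (1 + u^4) / d) by (apply Rdiv_lt_0_compat; nra).
  assert (Hw2 : -1 / d < 0).
  { unfold Rdiv; apply Rmult_neg_pos; [lra|]. apply Rinv_0_lt_compat; exact Hd. }
  split; [split|split].
  - repeat constructor; unfold tlam; cbn [fst snd]; lra.
  - intros x y; unfold d, q, lam_of, rep_eval, tlam, talpha, tbeta; simpl.
    field; repeat split; nra.
  - repeat constructor; unfold nonproportional, talpha, tbeta; simpl; nra.
  - count_signs.
Qed.

Lemma lam_of_onto lam : -(3/5) < lam < 0 -> exists u, 1 < u /\ lam = lam_of u.
Proof.
  intros Hlam.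
  set (f := fun u => - (u * (1 + u + u^2) + lam * (1 + u + u^2 + u^3 + u^4))).
  set (b := 1 - 3/lam).
  assert (Hb : 1 < b) by (unfold b; assert (3/lam < 0) by (apply Rdiv_pos_neg; lra); lra).
  assert (Hf1 : f 1 < 0) by (unfold f; lra).
  assert (Hfb : 0 < f b).
  { assert (E : lam * b = lam - 3) by (unfold b; field; lra).
    assert (E4 : lam * b^4 = (lam - 3) * b^3)
      by (replace (lam * b^4) with ((lam * b) * b^3) by ring; rewrite E; ring).
    assert (b + b^2 + b^3 <= 3 * b^3) by nra.
    assert (0 < b^3) by (apply pow_lt; lra).
    assert (lam * b^3 < 0) by nra.
    assert (lam * (1 + b + b^2 + b^3) < 0) by nra.
    unfold f; lra. }
  destruct (IVT f 1 b ltac:(unfold f; reg) Hb Hf1 Hfb) as (u & [Hu1 Hub] & Hfu).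
  assert (Hu : 1 < u) by (destruct (Req_dec u 1) as [->|]; lra).
  exists u; split; [exact Hu|].
  assert (0 < 1 + u + u^2 + u^3 + u^4) by nra.
  unfold f in Hfu; unfold lam_of; field_simplify_eq; lra.
Qed.

Lemma badge_23 lam : -(3/5) < lam <= 0 -> in_badges (q lam) (2%nat, 3%nat).
Proof.
  intros Hlam.
  destruct (Req_dec lam 0) as [->|Hlam0]; [exact badge_23_at_0|].
  destruct (lam_of_onto lam) as (u & Hu & ->); [lra|].
  exact (family_in_badges u Hu).
Qed.

Lemma badges_dominate p k :
  odd_in_y p ->
  (forall l, is_representation p l -> honest l -> (k <= npos l)%nat) ->
  forall cd, in_badges p cd -> badge_le (k, k) cd.
Proof.
  intros Hodd Hbound [c d] (l & Hrep & Hhon & Hbadge).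
  rewrite badge_npos_nneg in Hbadge; injection Hbadge as <- <-.
  split; simpl.
  - exact (Hbound l Hrep Hhon).
  - rewrite <- flip_npos.
    apply Hbound; [apply flip_representation|apply flip_honest]; assumption.
Qed.

Lemma unique_signature p ab :
  in_badges p ab -> (forall cd, in_badges p cd -> badge_le ab cd) ->
  forall x, is_signature p x <-> x = ab.
Proof.
  intros Hab Hleast x; split.
  - intros [Hx Hmin]; symmetry; exact (Hmin ab Hab (Hleast x Hx)).
  - intros ->; split; [exact Hab|].
    intros cd Hcd Hle; destruct (Hleast cd Hcd), Hle, cd, ab; simpl in *; f_equal; lia.
Qed.

Lemma twin_signatures p k :
  in_badges p (k, S k) -> in_badges p (S k, k) ->
  (forall cd, in_badges p cd -> badge_le (k, k) cd) -> ~ in_badges p (k, k) ->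
  forall x, is_signature p x <-> x = (k, S k) \/ x = (S k, k).
Proof.
  intros Hleft Hright Hlb Hdiag.
  assert (Hall : forall cd, in_badges p cd -> badge_le (k, S k) cd \/ badge_le (S k, k) cd).
  { intros [c d] Hcd; destruct (Hlb _ Hcd) as [Hc Hd]; simpl in *.
    destruct (Nat.eq_dec c k) as [->|Hck]; [destruct (Nat.eq_dec d k) as [->|Hdk]|].
    - contradiction.
    - left; split; simpl; lia.
    - right; split; simpl; lia. }
  intros x; split.
  - intros [Hx Hmin]; destruct (Hall x Hx) as [Hle|Hle]; [left|right];
      symmetry; apply Hmin; assumption.
  - intros [-> | ->]; split; try assumption; intros cd Hcd Hle;
      destruct (Hall cd Hcd) as [[A1 A2]|[A1 A2]], Hle as [B1 B2], cd; simpl in *; f_equal; lia.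
Qed.

Theorem theorem4p4 :
  (forall ab, is_signature (q 1) ab <-> ab = (1%nat, 1%nat)) /\
  (forall lam : R, 0 < lam -> lam <> 1 ->
     forall ab, is_signature (q lam) ab <-> ab = (2%nat, 2%nat)) /\
  (forall lam : R, -(3/5) < lam <= 0 ->
     forall ab, is_signature (q lam) ab <-> ab = (2%nat, 3%nat) \/ ab = (3%nat, 2%nat)) /\
  (forall lam : R, lam <= -(3/5) ->
     forall ab, is_signature (q lam) ab <-> ab = (3%nat, 3%nat)).
Proof.
  split; [|split; [|split]].
  - apply unique_signature; [exact badge_11_at_1|].
    apply badges_dominate; [apply q_odd_in_y|].
    intros l Hrep _; exact (positive_count_ge1 1 l Hrep).
  - intros lam Hlam Hlam1.
    apply unique_signature; [exact (badge_22 lam Hlam Hlam1)|].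
    apply badges_dominate; [apply q_odd_in_y|].
    intros l Hrep _; apply (positive_count_ge2 lam); [|exact Hrep].
    destruct (Rtotal_order lam 1) as [H|[H|H]]; [left; lra|contradiction|right; exact H].
  - intros lam Hlam.
    apply twin_signatures.
    + exact (badge_23 lam Hlam).
    + exact (in_badges_swap _ _ _ (q_odd_in_y lam) (badge_23 lam Hlam)).
    + apply badges_dominate; [apply q_odd_in_y|].
      intros l Hrep _; apply (positive_count_ge2 lam); [left; lra|exact Hrep].
    + apply no_badge_22; lra.
  - intros lam Hlam.
    apply unique_signature; [apply badge_33; lra|].
    apply badges_dominate; [apply q_odd_in_y|].
    intros l Hrep Hhon; exact (positive_count_ge3 lam l Hlam Hrep Hhon).
Qed.
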